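(* Let $\mathcal{H}$ be a connected $Moor$-bialgebra. Then $\mathcal{H}$ is generated, as a $Moor$-algebra, by its primitive elements $\ker\Delta$. Moreover, $\ker\Delta=\mathcal{H}_1$.
   Context: $K$ is a field of characteristic zero; $\tau$ is the flip map. A $Moor$-bialgebra is a graded vector space $\mathcal{H}=\bigoplus_{p>0}\mathcal{H}_p$ with a bilinear operation $\prec$ satisfying $\mathcal{H}_p\prec\mathcal{H}_q\subseteq\mathcal{H}_{p+q}$, $(x\prec y)\prec z=(x\prec z)\prec y$ and $x\prec(y\prec z)=0$, together with a linear map $\Delta:\mathcal{H}\to\mathcal{H}\otimes\mathcal{H}$ (Sweedler notation $\Delta(x)=x_{(1)}\otimes x_{(2)}$) satisfying $(\mathrm{id}\otimes\Delta)\Delta=0$, $(\Delta\otimes\mathrm{id})\Delta=(\mathrm{id}\otimes\tau)(\Delta\otimes\mathrm{id})\Delta$, and $\Delta(x\prec y)=x\otimes e(y)+(x_{(1)}\prec y)\otimes x_{(2)}$ for all $x,y$, where $e:\mathcal{H}\to\mathcal{H}_1$ is the canonical projection. Primitive elements are the elements of $\ker\Delta$. Set $\Delta^{(1)}=\Delta$ and $\Delta^{(r)}=(\Delta\otimes\mathrm{id}^{\otimes(r-1)})\Delta^{(r-1)}$. The $Moor$-bialgebra is connected if $\ker\Delta\subseteq\mathcal{H}_1$ and $\mathcal{H}=\bigcup_{r\geq 1}\ker\Delta^{(r)}$. *)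

From HB Require Import structures.
From mathcomp Require Import all_boot all_order all_algebra.
Set Implicit Arguments.
Unset Strict Implicit.
Unset Printing Implicit Defensive.
Import GRing.Theory.
Local Open Scope ring_scope.

(* Convention: an element of the n-fold tensor power
   H^{(x) n} is represented by a finite list of n-lists [a_1;...;a_n],
   standing for the sum of the pure tensors a_1 (x) ... (x) a_n.
   Two such representatives denote the same tensor iff they agree under
   every family of linear functionals f_1,...,f_n : H -> K
   (sum of f_1(a_1)...f_n(a_n)); over a field this is exactly equality
   in the tensor product. *)

Section Moor.
Variables (K : fieldType) (H : lmodType K).

Definition tensor := seq (seq H).

Definition tens_eval (fs : nat -> {scalar H}) (s : tensor) : K :=
  \sum_(t <- s) \prod_(i < size t) fs i (nth 0 t i).

Definition tensor_eq (s t : tensor) : Prop :=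
  forall fs : nat -> {scalar H}, tens_eval fs s = tens_eval fs t.

Definition tens2 (s : seq (H * H)) : tensor := [seq [:: p.1; p.2] | p <- s].

(* Graded vector space H = (+)_{p>0} H_p, encoded by the family of
   canonical projections pr p : H -> H_p. *)
Definition graded (pr : nat -> {linear H -> H}) : Prop :=
  [/\ (forall p q x, pr p (pr q x) = if p == q then pr p x else 0),
      (forall x, pr 0 x = 0) &
      (forall x, exists N, x = \sum_(p < N) pr p x)].

Definition homog (pr : nat -> {linear H -> H}) (p : nat) (x : H) : Prop :=
  pr p x = x.

Definition moor_algebra (pr : nat -> {linear H -> H}) (prec : H -> H -> H) : Prop :=
  [/\ (forall a x y z, prec (a *: x + y) z = a *: prec x z + prec y z),
      (forall a x y z, prec z (a *: x + y) = a *: prec z x + prec z y),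
      (forall p q x y, homog pr p x -> homog pr q y -> homog pr (p + q) (prec x y)),
      (forall x y z, prec (prec x y) z = prec (prec x z) y) &
      (forall x y z, prec x (prec y z) = 0)].

Definition delta_linear (Delta : H -> seq (H * H)) : Prop :=
  forall a x y, tensor_eq (tens2 (Delta (a *: x + y)))
    ([seq [:: a *: p.1; p.2] | p <- Delta x] ++ tens2 (Delta y)).

(* (id (x) Delta) Delta x *)
Definition id_delta_delta (Delta : H -> seq (H * H)) (x : H) : tensor :=
  [seq [:: p.1; q.1; q.2] | p <- Delta x, q <- Delta p.2].

(* (Delta (x) id) Delta x *)
Definition delta_id_delta (Delta : H -> seq (H * H)) (x : H) : tensor :=
  [seq [:: q.1; q.2; p.2] | p <- Delta x, q <- Delta p.1].

(* (id (x) tau) (Delta (x) id) Delta x *)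
Definition flip_delta_id_delta (Delta : H -> seq (H * H)) (x : H) : tensor :=
  [seq [:: q.1; p.2; q.2] | p <- Delta x, q <- Delta p.1].

Definition moor_bialgebra (pr : nat -> {linear H -> H}) (prec : H -> H -> H)
    (Delta : H -> seq (H * H)) : Prop :=
  [/\ graded pr, moor_algebra pr prec, delta_linear Delta &
    [/\ (forall x, tensor_eq (id_delta_delta Delta x) [::]),
      (forall x, tensor_eq (delta_id_delta Delta x) (flip_delta_id_delta Delta x)) &
      (forall x y, tensor_eq (tens2 (Delta (prec x y)))
          ([:: [:: x; pr 1%N y]] ++ [seq [:: prec p.1 y; p.2] | p <- Delta x]))]].

Definition primitive (Delta : H -> seq (H * H)) (x : H) : Prop :=
  tensor_eq (tens2 (Delta x)) [::].

(* Delta^{(r)} x as an (r+1)-tensor; Delta^{(0)} = id, Delta^{(1)} = Delta,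
   Delta^{(r)} = (Delta (x) id^{(x)(r-1)}) Delta^{(r-1)} *)
Fixpoint iter_delta (Delta : H -> seq (H * H)) (r : nat) (x : H) : tensor :=
  match r with
  | 0 => [:: [:: x]]
  | r'.+1 => [seq q.1 :: q.2 :: behead t | t <- iter_delta Delta r' x,
                                           q <- Delta (head 0 t)]
  end.

Definition connected (pr : nat -> {linear H -> H}) (Delta : H -> seq (H * H)) : Prop :=
  (forall x, primitive Delta x -> homog pr 1 x) /\
  (forall x, exists2 r, (1 <= r)%N & tensor_eq (iter_delta Delta r x) [::]).

Inductive moor_gen (prec : H -> H -> H) (S : H -> Prop) : H -> Prop :=
| mg_base x : S x -> moor_gen prec S x
| mg_zero : moor_gen prec S 0
| mg_lin a x y : moor_gen prec S x -> moor_gen prec S y -> moor_gen prec S (a *: x + y)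
| mg_prec x y : moor_gen prec S x -> moor_gen prec S y -> moor_gen prec S (prec x y).

End Moor.

(* Write N x := x_(1) ≺ x_(2) ([prec_delta]) and L_g := (id ⊗ g) ∘ Δ ([left_contract g]).
   Because (id ⊗ Δ) Δ = 0, each (f ⊗ id) Δ x is primitive, hence of degree 1 by
   connectedness; with the rule for Δ (x ≺ y) and (Δ ⊗ id) Δ = (id ⊗ τ)(Δ ⊗ id) Δ this
   gives L_g N = (N + 1) L_g.  Let F_r be the set of x all of whose r-fold contractions
   vanish (i.e. Δ^(r) x = 0); connectedness says that H is the union of the F_r.
   The intertwining relation shows by induction that N (N - 1) ... (N - r + 1) kills F_r,
   and that an x in F_(r+1) with N x = 0 is primitive: L_g x lies in F_r and N acts on it
   by -1, so (-1)(-2)...(-r) L_g x = 0, whence L_g x = 0 in characteristic 0.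
   For x in F_(r+1), y := (N - 1) ... (N - r) x is therefore primitive and
   y = (-1)^r r! x + N w with w in F_(r+1).  Writing Δ w = Σ a_i ⊗ b_i with both families
   linearly independent, each a_i is some L_g w in F_r and each b_i some (f ⊗ id) Δ w,
   a primitive; so N w = Σ a_i ≺ b_i is generated by induction, and so is x.
   Finally the degree-1 projection kills every product, so it maps the generated
   algebra into the primitives; applied to x in H_1 this gives H_1 ⊆ ker Δ. *)

From HB Require Import structures.
From mathcomp Require Import all_boot all_order all_algebra.
From mathcomp Require Import boolp classical_sets zify ring.
Set Implicit Arguments.
Unset Strict Implicit.
Unset Printing Implicit Defensive.
Import GRing.Theory.
Local Open Scope ring_scope.

Section LinearGraph.
Variables (K : fieldType) (V : lmodType K).
Local Open Scope classical_set_scope.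

Definition scalar_of (f : V -> K) (fP : forall a u v, f (a *: u + v) = a * f u + f v) :
  {scalar V} := HB.pack f (GRing.isLinear.Build K V K^o *%R f fP).

Definition linear_graph (G : set (V * K)) :=
  (forall u c c', G (u, c) -> G (u, c') -> c = c') /\
  (forall a u c v d, G (u, c) -> G (v, d) -> G (a *: u + v, a * c + d)).

Definition graph_adjoin (G : set (V * K)) (y : V) (e : K) : set (V * K) :=
  [set z | exists u c t, G (u, c) /\ z = (t *: y + u, t * e + c)].

Lemma sub_graph_adjoin G y e : G `<=` graph_adjoin G y e.
Proof. by move=> [u c] Guc; exists u, c, 0; rewrite scale0r mul0r !add0r. Qed.

Lemma linear_graph_adjoin G y e : linear_graph G -> G (0, 0) ->
  (forall c, ~ G (y, c)) -> linear_graph (graph_adjoin G y e).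
Proof.
move=> [Gfun Glin] G00 Gy; split.
- move=> u c c' [u1 [c1 [t1 [G1 [-> ->]]]]] [u2 [c2 [t2 [G2 [e12 ->]]]]].
  have [t12|t12] := eqVneq t1 t2.
    by move: e12 G1; rewrite t12 => /addrI -> G1; rewrite (Gfun _ _ _ G1 G2).
  exfalso; apply: (Gy ((t1 - t2)^-1 * (-1 * c1 + c2) + 0)).
  have dy : (t1 - t2) *: y = -1 *: u1 + u2.
    by rewrite scalerBl scaleN1r; apply/eqP; rewrite subr_eq addrAC -addrA -e12 addrC addrK.
  have ey : y = (t1 - t2)^-1 *: (-1 *: u1 + u2) + 0.
    by rewrite addr0 -dy scalerA mulVf ?scale1r // subr_eq0.
  by rewrite ey; apply: Glin (Glin _ _ _ _ _ G1 G2) G00.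
- move=> a u c v d [u1 [c1 [t1 [G1 [-> ->]]]]] [u2 [c2 [t2 [G2 [-> ->]]]]].
  exists (a *: u1 + u2), (a * c1 + c2), (a * t1 + t2); split; first exact: Glin.
  by congr (_, _); [rewrite scalerDr scalerDl scalerA addrACA | ring].
Qed.

(* Unions of chains; [G0 `|` _] keeps the empty chain admissible for Zorn. *)
Lemma linear_graph_chain (G0 : set (V * K)) (F : set (set (V * K))) :
  linear_graph G0 -> (forall X, F X -> linear_graph (G0 `|` X)) ->
  total_on F subset -> linear_graph (G0 `|` \bigcup_(X in F) X).
Proof.
move=> G0lin Flin Ftot; set U := _ `|` _.
have sub X : F X -> G0 `|` X `<=` U by move=> FX z [?|?]; [left|right; exists X].
have common z1 z2 : U z1 -> U z2 ->
    exists2 X, linear_graph X & [/\ X z1, X z2 & X `<=` U].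
  case=> [h1|[X FX h1]] [h2|[Y FY h2]].
  - by exists G0 => //; split=> // z Gz; left.
  - by exists (G0 `|` Y); [exact: Flin | split; [left|right|exact: sub]].
  - by exists (G0 `|` X); [exact: Flin | split; [right|left|exact: sub]].
  - have [XY|YX] := Ftot X Y FX FY.
    + by exists (G0 `|` Y); [exact: Flin | split; [right; exact: XY|right|exact: sub]].
    + by exists (G0 `|` X); [exact: Flin | split; [right|right; exact: YX|exact: sub]].
split=> [u c c' h1 h2 | a u c v d h1 h2].
- by have [X [Xfun _] [X1 X2 _]] := common _ _ h1 h2; exact: Xfun X1 X2.
- by have [X [_ Xlin] [X1 X2 XU]] := common _ _ h1 h2; exact/XU/Xlin.
Qed.

Lemma linear_graph_total G0 : linear_graph G0 -> G0 (0, 0) ->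
  exists2 G, G0 `<=` G & linear_graph G /\ forall y, exists c, G (y, c).
Proof.
move=> G0lin G00.
have [A [Alin Amax]] : exists A, linear_graph (G0 `|` A) /\
    forall B, A `<` B -> ~ linear_graph (G0 `|` B).
  by apply: Zorn_bigcup => F FP Ftot; exact: linear_graph_chain.
exists (G0 `|` A) => [z|]; first by left.
split=> // y; apply: contrapT => Gy.
have Gy' c : ~ (G0 `|` A) (y, c) by move=> h; apply: Gy; exists c.
pose B := graph_adjoin (G0 `|` A) y 0.
have sAB := @sub_graph_adjoin (G0 `|` A) y 0.
apply: (Amax B).
  split=> [z Az|BA]; first by apply: sAB; right.
  apply: (Gy' 0); right; apply: BA; exists 0, 0, 1.
  by rewrite scale1r addr0 mulr0 addr0; split=> //; left.
have -> : G0 `|` B = B.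
  by apply/seteqP; split=> [z [G0z|//]|z Bz]; [apply: sAB; left | right].
by apply: linear_graph_adjoin => //; left.
Qed.

Lemma linear_graph_scalar G : linear_graph G -> (forall y, exists c, G (y, c)) ->
  exists f : {scalar V}, forall y, G (y, f y).
Proof.
move=> [Gfun Glin] Gtot; pose f y := proj1_sig (cid (Gtot y)).
have fG y : G (y, f y) by rewrite /f; case: cid.
have fP a u v : f (a *: u + v) = a * f u + f v.
  exact: Gfun (fG _) (Glin _ _ _ _ _ (fG u) (fG v)).
by exists (scalar_of fP).
Qed.

Lemma scalar_annihilator (W : set V) x : W 0 ->
  (forall a u v, W u -> W v -> W (a *: u + v)) -> ~ W x ->
  exists f : {scalar V}, (forall w, W w -> f w = 0) /\ f x = 1.
Proof.
move=> W0 Wlin Wx; pose W0graph := [set z : V * K | W z.1 /\ z.2 = 0].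
have W0lin : linear_graph W0graph.
  split=> [u c c' [_ /= ->] [_ /= ->] // | a u c v d [/= Wu ->] [/= Wv ->]].
  by split; [exact: Wlin | rewrite mulr0 addr0].
have G0lin : linear_graph (graph_adjoin W0graph x 1).
  by apply: linear_graph_adjoin => // c [].
have G00 : graph_adjoin W0graph x 1 (0, 0) by apply: sub_graph_adjoin.
have [G sG [Glin Gtot]] := linear_graph_total G0lin G00.
have [f fG] := linear_graph_scalar Glin Gtot.
exists f; split=> [w Ww|]; apply: Glin.1 (fG _) _; apply: sG.
  by apply: sub_graph_adjoin.
by exists 0, 0, 1; rewrite scale1r addr0 mulr1 addr0.
Qed.

Lemma scalar_separates x y : (forall f : {scalar V}, f x = f y) -> x = y.
Proof.
move=> fxy; apply/eqP; rewrite -subr_eq0; apply/eqP; apply: contrapT => nxy.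
have Wlin a (u v : V) : u = 0 -> v = 0 -> a *: u + v = 0.
  by move=> -> ->; rewrite scaler0 addr0.
have [f [_ /eqP]] := @scalar_annihilator [set 0] (x - y) erefl Wlin nxy.
by rewrite linearB /= fxy subrr eq_sym oner_eq0.
Qed.

End LinearGraph.

Section Bilinear.
Variables (K : fieldType) (U V : lmodType K).

Definition lin_of (f : U -> V) (fP : forall a u v, f (a *: u + v) = a *: f u + f v) :
  {linear U -> V} := HB.pack f (GRing.isLinear.Build K U V *:%R f fP).

Definition is_bilinear (B : U -> U -> V) :=
  (forall a x y z, B (a *: x + y) z = a *: B x z + B y z) /\
  (forall a x y z, B z (a *: x + y) = a *: B z x + B z y).

Variables (B : U -> U -> V) (hB : is_bilinear B).

Let linear_l z := lin_of (fun a x y => hB.1 a x y z).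
Let linear_r z := lin_of (fun a x y => hB.2 a x y z).

Lemma bilinear0l z : B 0 z = 0. Proof. exact: (linear0 (linear_l z)). Qed.
Lemma bilinear0r z : B z 0 = 0. Proof. exact: (linear0 (linear_r z)). Qed.
Lemma bilinearZl c x z : B (c *: x) z = c *: B x z.
Proof. exact: (linearZZ (linear_l z)). Qed.
Lemma bilinearZr c x z : B z (c *: x) = c *: B z x.
Proof. exact: (linearZZ (linear_r z)). Qed.
Lemma bilinearDr x y z : B z (x + y) = B z x + B z y.
Proof. exact: (linearD (linear_r z)). Qed.
Lemma bilinear_suml (I : Type) (r : seq I) (F : I -> U) z :
  B (\sum_(i <- r) F i) z = \sum_(i <- r) B (F i) z.
Proof. exact: (linear_sum (linear_l z)). Qed.
Lemma bilinear_sumr (I : Type) (r : seq I) (F : I -> U) z :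
  B z (\sum_(i <- r) F i) = \sum_(i <- r) B z (F i).
Proof. exact: (linear_sum (linear_r z)). Qed.

Lemma bilinear_flip : is_bilinear (fun x y => B y x).
Proof. by split=> a x y z; [rewrite hB.2 | rewrite hB.1]. Qed.

End Bilinear.

Lemma sum_indicator (K : fieldType) (V : lmodType K) m j (F : nat -> V) : (j < m)%N ->
  \sum_(i < m) ((i : nat) == j)%:R *: F i = F j.
Proof.
move=> jm; rewrite (bigD1 (Ordinal jm)) //= eqxx scale1r big1 ?addr0 // => i ij.
have ij' : (i : nat) != j by apply: contra ij => /eqP ij; apply/eqP/val_inj.
by rewrite (negbTE ij') scale0r.
Qed.

Section TensorNormalForm.
Variables (K : fieldType) (H : lmodType K).

Lemma tensor_bilinear (f g : {scalar H}) : is_bilinear (fun u v : H => (f u * g v : K^o)).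
Proof.
split=> a x y z; rewrite linearP /=; first by rewrite mulrDl -mulrA.
by rewrite mulrDr mulrCA.
Qed.

Definition bisum (V : lmodType K) (B : H -> H -> V) n (a b : nat -> H) :=
  \sum_(i < n) B (a i) (b i).

(* [a 0, ..., a (n-1)] admits a dual family of functionals, i.e. is linearly independent. *)
Definition has_dual n (a : nat -> H) :=
  forall j : 'I_n, exists f : {scalar H}, forall i : 'I_n, f (a i) = (i == j)%:R.

Lemma bisum_drop (V : lmodType K) (B : H -> H -> V) m (j : 'I_m.+1) (a b : nat -> H)
    (mu : nat -> K) :
  is_bilinear B -> a j = \sum_(i < m) mu i *: a (bump j i) ->
  bisum B m.+1 a b = bisum B m (a \o bump j) (fun i => b (bump j i) + mu i *: b j).
Proof.
move=> hB aj; rewrite /bisum (bigD1_ord j) //= aj (bilinear_suml hB) addrC -big_split /=.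
by apply: eq_bigr => i _; rewrite (bilinearZl hB) (bilinearDr hB) (bilinearZr hB).
Qed.

Lemma dependent_or_has_dual m (a : nat -> H) :
  (exists (j : 'I_m.+1) (mu : nat -> K), a j = \sum_(i < m) mu i *: a (bump j i))
  \/ has_dual m.+1 a.
Proof.
set dependent := exists j, _.
case: (pselect dependent) => [dep|indep]; [by left | right => j].
pose W v := exists mu : nat -> K, v = \sum_(i < m) mu i *: a (bump j i).
have W0 : W 0 by exists (fun=> 0); rewrite big1 // => i _; rewrite scale0r.
have Wlin c u v : W u -> W v -> W (c *: u + v).
  move=> [mu ->] [nu ->]; exists (fun i => c * mu i + nu i).
  by rewrite scaler_sumr -big_split; apply: eq_bigr => i _; rewrite scalerA scalerDl.
have [|f [fW fj]] := scalar_annihilator W0 Wlin (x := a j).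
  by move=> [mu aj]; apply: indep; exists j, mu.
exists f => i; have [->|ij] := eqVneq i j; first by rewrite fj.
rewrite mulr0n; apply: fW; have ui : (unbump j i < m)%N.
  by move: (ltn_ord i) (ltn_ord j) ij; rewrite /unbump -val_eqE; case: ltnP => /=; lia.
exists (fun k => (k == unbump j i)%:R).
by rewrite (sum_indicator (a \o bump j)) //= unbumpKcond val_eqE (negbTE ij).
Qed.

Lemma bisum_normal_form n (a b : nat -> H) : exists m (a' b' : nat -> H),
  [/\ forall (V : lmodType K) (B : H -> H -> V),
        is_bilinear B -> bisum B n a b = bisum B m a' b',
      has_dual m a' & has_dual m b'].
Proof.
elim: n a b => [|m IH] a b; first by exists 0%N, a, b; split=> // -[].
have [[j [mu aj]]|da] := dependent_or_has_dual m a.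
  have [k [a' [b' [eq_ab da' db']]]] := IH (a \o bump j) (fun i => b (bump j i) + mu i *: b j).
  by exists k, a', b'; split=> // V B hB; rewrite -eq_ab // (bisum_drop _ hB aj).
have [[j [mu bj]]|db] := dependent_or_has_dual m b.
  have [k [a' [b' [eq_ab da' db']]]] := IH (fun i => a (bump j i) + mu i *: a j) (b \o bump j).
  exists k, a', b'; split=> // V B hB; rewrite -eq_ab //.
  exact: (bisum_drop _ (bilinear_flip hB) bj).
by exists m.+1, a, b.
Qed.

Lemma has_dual_bisum_eq0 m (a b : nat -> H) : has_dual m a ->
  (forall f g : {scalar H}, \sum_(i < m) f (a i) * g (b i) = 0) -> forall i : 'I_m, b i = 0.
Proof.
move=> da ab0 i; have [f fa] := da i; apply: scalar_separates => g.
rewrite linear0 -(ab0 f g) (eq_bigr (fun k : 'I_m => ((k : nat) == i)%:R * g (b k))).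
  by symmetry; exact: (sum_indicator (V := K^o) (fun k => g (b k)) (ltn_ord i)).
by move=> k _; rewrite fa.
Qed.

Definition pairsum (V : lmodType K) (B : H -> H -> V) (s : seq (H * H)) :=
  \sum_(p <- s) B p.1 p.2.

Lemma pairsum_normal_form s : exists m (a b : nat -> H),
  [/\ forall (V : lmodType K) (B : H -> H -> V),
        is_bilinear B -> pairsum B s = bisum B m a b,
      has_dual m a & has_dual m b].
Proof.
have [m [a [b [eq_ab da db]]]] := bisum_normal_form (size s)
  (fun i => (nth (0, 0) s i).1) (fun i => (nth (0, 0) s i).2).
exists m, a, b; split=> // V B hB; rewrite -eq_ab //.
by rewrite /pairsum /bisum (big_nth (0, 0)) big_mkord.
Qed.

Lemma scale_left_bilinear (g : {scalar H}) : is_bilinear (fun u v : H => g v *: u).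
Proof.
split=> a x y z; first by rewrite scalerDr !scalerA mulrC.
by rewrite linearP /= scalerDl scalerA.
Qed.

Lemma scale_right_bilinear (f : {scalar H}) : is_bilinear (fun u v : H => f u *: v).
Proof.
split=> a x y z; first by rewrite linearP /= scalerDl scalerA.
by rewrite scalerDr !scalerA mulrC.
Qed.

Section DualCoefficient.
Variables (s : seq (H * H)) (m : nat) (a b : nat -> H) (i : 'I_m).
Hypothesis s_ab : forall (V : lmodType K) (B : H -> H -> V),
  is_bilinear B -> pairsum B s = bisum B m a b.

Lemma pairsum_dual_left (g : {scalar H}) : (forall k : 'I_m, g (b k) = (k == i)%:R) ->
  pairsum (fun u v => g v *: u) s = a i.
Proof.
move=> gb; rewrite (s_ab (scale_left_bilinear g)) /bisum.
rewrite (eq_bigr (fun k : 'I_m => ((k : nat) == i)%:R *: a k)) => [|k _]; last by rewrite gb.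
exact: sum_indicator.
Qed.

Lemma pairsum_dual_right (f : {scalar H}) : (forall k : 'I_m, f (a k) = (k == i)%:R) ->
  pairsum (fun u v => f u *: v) s = b i.
Proof.
move=> fa; rewrite (s_ab (scale_right_bilinear f)) /bisum.
rewrite (eq_bigr (fun k : 'I_m => ((k : nat) == i)%:R *: b k)) => [|k _]; last by rewrite fa.
exact: sum_indicator.
Qed.

End DualCoefficient.

Lemma tens_eval_tens2 (fs : nat -> {scalar H}) s :
  tens_eval fs (tens2 s) = \sum_(p <- s) fs 0%N p.1 * fs 1%N p.2.
Proof.
rewrite /tens_eval /tens2 big_map; apply: eq_bigr => p _.
by rewrite !big_ord_recr big_ord0 /= mul1r.
Qed.

Lemma tensor_eq_tens2P s t :
  (forall f g : {scalar H}, \sum_(p <- s) f p.1 * g p.2 = \sum_(p <- t) f p.1 * g p.2) ->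
  tensor_eq (tens2 s) (tens2 t).
Proof. by move=> st fs; rewrite !tens_eval_tens2. Qed.

Lemma tens_eval_allpairs3 (fs : nat -> {scalar H}) (s : seq (H * H))
    (r : H * H -> seq (H * H)) (u v w : H * H -> H * H -> H) :
  tens_eval fs [seq [:: u p q; v p q; w p q] | p <- s, q <- r p] =
  \sum_(p <- s) \sum_(q <- r p) fs 0%N (u p q) * fs 1%N (v p q) * fs 2%N (w p q).
Proof.
rewrite /tens_eval big_allpairs_dep; apply: eq_bigr => p _; apply: eq_bigr => q _.
by rewrite !big_ord_recr big_ord0 /= mul1r.
Qed.

Lemma tens_eval_ext (fs fs' : nat -> {scalar H}) n (s : seq (seq H)) :
  (forall t, t \in s -> (size t <= n)%N) -> (forall i, (i < n)%N -> fs i =1 fs' i) ->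
  tens_eval fs s = tens_eval fs' s.
Proof.
move=> s_n fs_eq; rewrite /tens_eval big_seq [RHS]big_seq; apply: eq_bigr => t ts.
by apply: eq_bigr => i _; apply: fs_eq; exact: leq_trans (ltn_ord i) (s_n t ts).
Qed.

(* The universal property of [H ⊗ H] in the list encoding of tensors. *)
Lemma pairsum_eq s t : tensor_eq (tens2 s) (tens2 t) ->
  forall (V : lmodType K) (B : H -> H -> V), is_bilinear B -> pairsum B s = pairsum B t.
Proof.
move=> st V B hB; pose u := s ++ [seq (- p.1, p.2) | p <- t].
have pairsum_u (W : lmodType K) (C : H -> H -> W) :
    is_bilinear C -> pairsum C u = pairsum C s - pairsum C t.
  move=> hC; rewrite /pairsum big_cat big_map -sumrN; congr (_ + _).
  by apply: eq_bigr => p _ /=; rewrite -scaleN1r (bilinearZl hC) scaleN1r.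
have [m [a [b [eq_ab da _]]]] := pairsum_normal_form u.
apply/eqP; rewrite -subr_eq0 -pairsum_u // eq_ab // /bisum big1 // => i _.
rewrite (has_dual_bisum_eq0 (b := b) da) ?(bilinear0r hB) // => f g.
have := st (nth f [:: f; g]); rewrite !tens_eval_tens2 /= => stfg.
have := eq_ab _ _ (tensor_bilinear f g); rewrite (pairsum_u _ _ (tensor_bilinear f g)).
by rewrite /pairsum stfg subrr.
Qed.

End TensorNormalForm.

Section GradedMoorAlgebra.
Variables (K : fieldType) (H : lmodType K) (pr : nat -> {linear H -> H}) (prec : H -> H -> H).
Hypotheses (pr_graded : graded pr) (prec_moor : moor_algebra pr prec).

Lemma prec_bilinear : is_bilinear prec.
Proof. by case: prec_moor. Qed.

Lemma pr1_prec x y : pr 1 (prec x y) = 0.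
Proof.
have [prK pr0 pr_sum] := pr_graded; have [_ _ homog_prec _ _] := prec_moor.
have [n1 ->] := pr_sum x; have [n2 ->] := pr_sum y.
rewrite (bilinear_suml prec_bilinear) linear_sum big1 // => -[[|p] _] _ /=.
  by rewrite pr0 (bilinear0l prec_bilinear) linear0.
rewrite (bilinear_sumr prec_bilinear) linear_sum big1 // => -[[|q] _] _ /=.
  by rewrite pr0 (bilinear0r prec_bilinear) linear0.
have homog_pr n u : homog pr n (pr n u) by rewrite /homog prK eqxx.
by rewrite -(homog_prec _ _ _ _ (homog_pr p.+1 x) (homog_pr q.+1 y)) prK addSn addnS.
Qed.

End GradedMoorAlgebra.

Lemma moor_gen_sum (K : fieldType) (H : lmodType K) (prec : H -> H -> H) (S : H -> Prop)
    (I : Type) (r : seq I) (F : I -> H) :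
  (forall i, moor_gen prec S (F i)) -> moor_gen prec S (\sum_(i <- r) F i).
Proof.
move=> SF; elim: r => [|i r IH]; first by rewrite big_nil; exact: mg_zero.
by rewrite big_cons -[F i]scale1r; apply: mg_lin.
Qed.

Section Falling.
Variables (K : fieldType) (H : lmodType K) (T : {linear H -> H}).

Fixpoint falling a r x :=
  if r is r'.+1 then T (falling a.+1 r' x) - a%:R *: falling a.+1 r' x else x.

Lemma fallingS a r x : falling a r.+1 x = T (falling a.+1 r x) - a%:R *: falling a.+1 r x.
Proof. by []. Qed.


Section Stable.
Variable S : set H.
Hypotheses (S_lin : forall c u v, S u -> S v -> S (c *: u + v))
  (S_T : forall u, S u -> S (T u)).

Lemma falling_stable r a x : S x -> S (falling a r x).
Proof.
elim: r a => [//|r IH] a Sx.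
by rewrite fallingS addrC -scaleNr; apply: S_lin; [exact: IH | apply: S_T; exact: IH].
Qed.

Lemma falling_decomp m a y : S 0 -> S y ->
  exists2 w, S w & falling a m y = (\prod_(k < m) - (a + k)%:R) *: y + T w.
Proof.
move=> S0 Sy; elim: m a => [|m IH] a.
  by exists 0; rewrite // linear0 big_ord0 scale1r addr0.
have [w' Sw' Fy] := IH a.+1; set F := falling a.+1 m y in Fy *.
exists (F - a%:R *: w').
  by rewrite addrC -scaleNr; apply: S_lin => //; exact: falling_stable.
rewrite fallingS -/F [in X in _ - X]Fy linearB (linearZZ T) big_ord_recl addn0.
under [in RHS]eq_bigr do rewrite lift0 addnS -addSn.
by rewrite scalerDr scalerA opprD addrCA mulNr scaleNr.
Qed.

End Stable.

Lemma falling_eigen lam u : T u = lam *: u ->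
  forall m a, falling a m u = (\prod_(k < m) (lam - (a + k)%:R)) *: u.
Proof.
move=> Tu; elim=> [|m IH] a; first by rewrite big_ord0 scale1r.
rewrite fallingS IH (linearZZ T) Tu big_ord_recl !scalerA -scalerBl addn0.
under [in RHS]eq_bigr do rewrite lift0 addnS -addSn.
by congr (_ *: u); ring.
Qed.

Lemma falling_shift (L : {linear H -> H}) : (forall x, L (T x) = L x + T (L x)) ->
  forall r a x, L (falling a.+1 r x) = falling a r (L x).
Proof.
move=> LT; elim=> [//|r IH] a x.
rewrite !fallingS linearB (linearZZ L) LT IH; set z := falling a.+1 r (L x).
rewrite mulrSr scalerDl scale1r opprD.
by rewrite [z + _]addrC -addrA [- _ - z]addrC addNKr.
Qed.

End Falling.

Section MoorBialgebra.
Variables (K : fieldType) (H : lmodType K) (pr : nat -> {linear H -> H})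
  (prec : H -> H -> H) (Delta : H -> seq (H * H)).
Hypothesis HM : moor_bialgebra pr prec Delta.

Let prec_bil : is_bilinear prec.
Proof. by case: HM => _ /prec_bilinear. Qed.

Lemma pairsum_delta_linear (V : lmodType K) (B : H -> H -> V) : is_bilinear B ->
  forall a x y, pairsum B (Delta (a *: x + y)) = a *: pairsum B (Delta x) + pairsum B (Delta y).
Proof.
move=> hB a x y; case: HM => _ _ Delta_lin _.
have Dxy : tensor_eq (tens2 (Delta (a *: x + y)))
    (tens2 ([seq (a *: p.1, p.2) | p <- Delta x] ++ Delta y)).
  by rewrite /tens2 map_cat -map_comp; exact: Delta_lin.
rewrite (pairsum_eq Dxy hB) /pairsum big_cat big_map scaler_sumr.
by congr (_ + _); apply: eq_bigr => p _; rewrite (bilinearZl hB).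
Qed.

Definition delta_map (V : lmodType K) (B : H -> H -> V) (hB : is_bilinear B) :
  {linear H -> V} := lin_of (pairsum_delta_linear hB).

Definition left_contract g := delta_map (scale_left_bilinear g).
Definition right_contract f := delta_map (scale_right_bilinear f).
Definition prec_delta := delta_map prec_bil.

Lemma left_contractE g x : left_contract g x = \sum_(p <- Delta x) g p.2 *: p.1.
Proof. by []. Qed.
Lemma right_contractE f x : right_contract f x = \sum_(p <- Delta x) f p.1 *: p.2.
Proof. by []. Qed.
Lemma prec_deltaE x : prec_delta x = \sum_(p <- Delta x) prec p.1 p.2.
Proof. by []. Qed.

Definition delta_eval (f g : {scalar H}) x := \sum_(p <- Delta x) f p.1 * g p.2.

Lemma delta_eval_linear f g a x y :
  delta_eval f g (a *: x + y) = a * delta_eval f g x + delta_eval f g y.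
Proof. exact: (pairsum_delta_linear (tensor_bilinear f g)). Qed.

Definition delta_scalar f g : {scalar H} := scalar_of (delta_eval_linear f g).

Lemma scalar_left_contract (phi g : {scalar H}) x :
  phi (left_contract g x) = delta_eval phi g x.
Proof. by rewrite left_contractE linear_sum; apply: eq_bigr => p _; rewrite linearZ mulrC. Qed.

Lemma scalar_right_contract (phi f : {scalar H}) x :
  phi (right_contract f x) = delta_eval f phi x.
Proof. by rewrite right_contractE linear_sum; apply: eq_bigr => p _; rewrite linearZ. Qed.

Lemma primitiveE x : primitive Delta x <-> forall f g, delta_eval f g x = 0.
Proof.
split=> [px f g | p0].
  by have := px (nth f [:: f; g]); rewrite tens_eval_tens2 /tens_eval big_nil.
by move=> fs; rewrite tens_eval_tens2 /tens_eval big_nil; exact: p0.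
Qed.

Lemma primitive_left_contract x : primitive Delta x <-> forall g, left_contract g x = 0.
Proof.
rewrite primitiveE; split=> [p0 g | l0 f g]; last by rewrite -scalar_left_contract l0 linear0.
by apply: scalar_separates => phi; rewrite scalar_left_contract p0 linear0.
Qed.

Lemma primitive0 : primitive Delta 0.
Proof. by apply/primitive_left_contract => g; rewrite linear0. Qed.

Lemma primitive_lin a x y :
  primitive Delta x -> primitive Delta y -> primitive Delta (a *: x + y).
Proof.
move=> /primitive_left_contract px /primitive_left_contract py.
by apply/primitive_left_contract => g; rewrite linearP px py scaler0 addr0.
Qed.

Lemma prec_delta_primitive x : primitive Delta x -> prec_delta x = 0.
Proof.
by move=> px; have := pairsum_eq (t := [::]) px prec_bil; rewrite /pairsum big_nil; exact.
Qed.

Lemma delta_coassoc_nil x (f g h : {scalar H}) :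
  \sum_(p <- Delta x) \sum_(q <- Delta p.2) f p.1 * g q.1 * h q.2 = 0.
Proof.
case: HM => _ _ _ [coassoc_nil _ _].
have := coassoc_nil x (nth f [:: f; g; h]).
by rewrite /id_delta_delta tens_eval_allpairs3 /tens_eval big_nil.
Qed.

Lemma delta_coassoc_flip x (f g h : {scalar H}) :
  \sum_(p <- Delta x) \sum_(q <- Delta p.1) f q.1 * g q.2 * h p.2 =
  \sum_(p <- Delta x) \sum_(q <- Delta p.1) f q.1 * g p.2 * h q.2.
Proof.
case: HM => _ _ _ [_ coassoc_flip _].
have := coassoc_flip x (nth f [:: f; g; h]).
by rewrite /delta_id_delta /flip_delta_id_delta !tens_eval_allpairs3.
Qed.

Lemma delta_eval_prec (f g : {scalar H}) x y :
  delta_eval f g (prec x y) = f x * g (pr 1 y) + \sum_(p <- Delta x) f (prec p.1 y) * g p.2.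
Proof.
case: HM => _ _ _ [_ _ delta_prec].
rewrite /delta_eval; have := delta_prec x y (nth f [:: f; g]).
rewrite tens_eval_tens2 /tens_eval big_cat big_map /=.
rewrite big_seq1 !big_ord_recr big_ord0 /= mul1r => ->; congr (_ + _).
by apply: eq_bigr => p _; rewrite !big_ord_recr big_ord0 /= mul1r.
Qed.

Lemma right_contract_primitive f x : primitive Delta (right_contract f x).
Proof.
apply/primitiveE => g h; rewrite -(delta_coassoc_nil x f g h).
transitivity (delta_scalar g h (right_contract f x)); first by [].
rewrite right_contractE linear_sum; apply: eq_bigr => p _.
by rewrite linearZ /= mulr_sumr; apply: eq_bigr => q _; rewrite mulrA.
Qed.

Lemma left_contract_prec g x y :
  left_contract g (prec x y) = g (pr 1 y) *: x + prec (left_contract g x) y.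
Proof.
apply: scalar_separates => phi; rewrite scalar_left_contract delta_eval_prec linearD linearZ /=.
rewrite mulrC; congr (_ + _); rewrite /pairsum (bilinear_suml prec_bil) linear_sum.
by apply: eq_bigr => p _; rewrite (bilinearZl prec_bil) linearZ /= mulrC.
Qed.

Lemma sum_prec_left_contract g x :
  \sum_(p <- Delta x) prec (left_contract g p.1) p.2 = prec_delta (left_contract g x).
Proof.
pose s1 := [seq (q.1, g p.2 *: q.2) | p <- Delta x, q <- Delta p.1].
pose s2 := [seq (q.1, g q.2 *: p.2) | p <- Delta x, q <- Delta p.1].
have s12 : tensor_eq (tens2 s1) (tens2 s2).
  apply: tensor_eq_tens2P => f1 f2; rewrite !big_allpairs_dep /=.
  transitivity (\sum_(p <- Delta x) \sum_(q <- Delta p.1) f1 q.1 * f2 q.2 * g p.2).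
    by apply: eq_bigr => p _; apply: eq_bigr => q _; rewrite linearZ /=; ring.
  rewrite delta_coassoc_flip; apply: eq_bigr => p _; apply: eq_bigr => q _.
  by rewrite linearZ /=; ring.
have e12 := pairsum_eq s12 prec_bil; rewrite /pairsum !big_allpairs_dep /= in e12.
transitivity (\sum_(p <- Delta x) \sum_(q <- Delta p.1) prec q.1 (g q.2 *: p.2)).
  apply: eq_bigr => p _; rewrite left_contractE (bilinear_suml prec_bil).
  by apply: eq_bigr => q _; rewrite (bilinearZl prec_bil) (bilinearZr prec_bil).
rewrite -e12 left_contractE linear_sum; apply: eq_bigr => p _.
rewrite (linearZZ prec_delta) prec_deltaE scaler_sumr; apply: eq_bigr => q _.
by rewrite (bilinearZr prec_bil).
Qed.

(* [filtration r x] amounts to [Δ^(r) x = 0]. *)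
Fixpoint filtration r x : Prop :=
  if r is r'.+1 then forall g, filtration r' (left_contract g x) else x = 0.

Lemma filtration0 r : filtration r 0.
Proof. by elim: r => [//|r IH] g; rewrite linear0. Qed.

Lemma filtration_lin r c x y :
  filtration r x -> filtration r y -> filtration r (c *: x + y).
Proof.
elim: r x y => [x y /= -> ->|r IH x y Fx Fy g]; first by rewrite scaler0 addr0.
by rewrite linearP; apply: IH.
Qed.

Definition iter_eval (fs : nat -> {scalar H}) r x := tens_eval fs (iter_delta Delta r x).

Lemma iter_deltaS r x : iter_delta Delta r.+1 x =
  [seq q.1 :: q.2 :: behead t | t <- iter_delta Delta r x, q <- Delta (head 0 t)].
Proof. by []. Qed.

Lemma size_iter_delta r x t : t \in iter_delta Delta r x -> size t = r.+1.
Proof.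
elim: r x t => [x t|r IH x t]; first by rewrite inE => /eqP ->.
by move=> /allpairsPdep [t' [q [t't' _ ->]]] /=; rewrite size_behead (IH _ _ t't').
Qed.

Lemma big_iter_deltaS r x (F : seq H -> K) :
  \sum_(t <- iter_delta Delta r.+1 x) F t =
  \sum_(p <- Delta x) \sum_(u <- iter_delta Delta r p.1) F (rcons u p.2).
Proof.
elim: r x F => [|r IH] x F; rewrite iter_deltaS big_allpairs_dep.
  by rewrite big_seq1; apply: eq_bigr => p _; rewrite big_seq1.
rewrite IH; apply: eq_bigr => p _; rewrite iter_deltaS big_allpairs_dep big_seq [RHS]big_seq.
by apply: eq_bigr => -[|a u] /size_iter_delta.
Qed.

Lemma iter_eval0 fs x : iter_eval fs 0 x = fs 0%N x.
Proof. by rewrite /iter_eval /tens_eval big_seq1 big_ord_recr big_ord0 /= mul1r. Qed.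

Lemma iter_evalS fs r x :
  iter_eval fs r.+1 x = \sum_(p <- Delta x) iter_eval fs r p.1 * fs r.+1 p.2.
Proof.
rewrite /iter_eval /tens_eval big_iter_deltaS; apply: eq_bigr => p _; rewrite big_distrl /=.
rewrite big_seq [RHS]big_seq; apply: eq_bigr => u /size_iter_delta su.
rewrite size_rcons su big_ord_recr /= nth_rcons su ltnn eqxx; congr (_ * _).
by apply: eq_bigr => i _; rewrite nth_rcons su ltn_ord.
Qed.

Lemma iter_eval_linear fs r a x y :
  iter_eval fs r (a *: x + y) = a * iter_eval fs r x + iter_eval fs r y.
Proof.
elim: r a x y => [|r IH] a x y; first by rewrite !iter_eval0 linearP.
by rewrite !iter_evalS; exact: (delta_eval_linear (scalar_of IH)).
Qed.

Lemma iter_evalS_contract fs r x :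
  iter_eval fs r.+1 x = iter_eval fs r (left_contract (fs r.+1) x).
Proof.
rewrite iter_evalS.
exact: esym (scalar_left_contract (scalar_of (iter_eval_linear fs r)) (fs r.+1) x).
Qed.

Lemma filtration_of_iter_eval r x : (forall fs, iter_eval fs r x = 0) -> filtration r x.
Proof.
elim: r x => [|r IH] x x0 /=.
  by apply: scalar_separates => f; rewrite linear0 -(iter_eval0 (fun=> f)) x0.
move=> g; apply: IH => fs; pose fs' i := if i == r.+1 then g else fs i.
rewrite /iter_eval (tens_eval_ext (fs' := fs') (n := r.+1)) => [| t /size_iter_delta -> // | i ir].
- transitivity (iter_eval fs' r (left_contract (fs' r.+1) x)); first by rewrite /fs' eqxx.
  by rewrite -iter_evalS_contract.
- by rewrite /fs' ltn_eqF.
Qed.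

Hypothesis primitive_homog1 : forall x, primitive Delta x -> homog pr 1 x.

Lemma sum_delta_pr1 (g : {scalar H}) x :
  \sum_(p <- Delta x) g (pr 1 p.2) *: p.1 = left_contract g x.
Proof.
apply: scalar_separates => phi; rewrite scalar_left_contract linear_sum.
rewrite -(scalar_right_contract g phi) -{1}(primitive_homog1 (right_contract_primitive phi x)).
rewrite right_contractE !linear_sum; apply: eq_bigr => p _.
by rewrite !linearZ /= mulrC.
Qed.

Lemma left_contract_prec_delta g x :
  left_contract g (prec_delta x) = left_contract g x + prec_delta (left_contract g x).
Proof.
rewrite prec_deltaE linear_sum (eq_bigr _ (fun p _ => left_contract_prec g p.1 p.2)).
by rewrite big_split sum_delta_pr1 sum_prec_left_contract.
Qed.

Lemma filtration_prec_delta r x : filtration r x -> filtration r (prec_delta x).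
Proof.
elim: r x => [x x0|r IH x Fx g]; first by have -> : x = 0 := x0; exact: linear0.
by have := filtration_lin 1 (Fx g) (IH _ (Fx g)); rewrite scale1r -left_contract_prec_delta.
Qed.

Lemma falling_filtration r x : filtration r x -> falling prec_delta 0 r x = 0.
Proof.
elim: r x => [//|r IH] x Fx; rewrite fallingS scale0r subr0.
apply: prec_delta_primitive; apply/primitive_left_contract => g.
by rewrite (falling_shift (left_contract_prec_delta g)) IH.
Qed.

Hypothesis charK0 : [pchar K] =i pred0.

Lemma natrS_neq0 n : n.+1%:R != 0 :> K.
Proof. by rewrite ((pcharf0P _).1 charK0). Qed.

Lemma primitive_of_prec_delta_eq0 r y :
  filtration r.+1 y -> prec_delta y = 0 -> primitive Delta y.
Proof.
move=> Fy Ny0; apply/primitive_left_contract => g; set u := left_contract g y.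
have Nu : prec_delta u = -1 *: u.
  by apply/eqP; rewrite scaleN1r -addr_eq0 addrC -left_contract_prec_delta Ny0 linear0.
have c0 : \prod_(k < r) (-1 - (0 + k)%:R) != 0 :> K.
  by apply/prodf_neq0 => k _; rewrite add0n -opprD -mulrS oppr_eq0 natrS_neq0.
have := falling_filtration (Fy g); rewrite (falling_eigen Nu) => /eqP.
by rewrite scaler_eq0 (negbTE c0) => /eqP.
Qed.

Lemma prec_delta_generated r w :
  (forall x, filtration r x -> moor_gen prec (primitive Delta) x) ->
  filtration r.+1 w -> moor_gen prec (primitive Delta) (prec_delta w).
Proof.
move=> IHr Fw; have [m [a [b [Dw_ab da db]]]] := pairsum_normal_form (Delta w).
rewrite [prec_delta w](Dw_ab _ _ prec_bil); apply: moor_gen_sum => i; apply: mg_prec.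
  have [g gb] := db i; rewrite -(pairsum_dual_left Dw_ab gb); exact: IHr (Fw g).
have [f fa] := da i; rewrite -(pairsum_dual_right Dw_ab fa).
by apply: mg_base; exact: right_contract_primitive.
Qed.

Lemma filtration_generated r x : filtration r x -> moor_gen prec (primitive Delta) x.
Proof.
elim: r x => [x /= ->|r IH x Fx]; first exact: mg_zero.
have F_lin := filtration_lin (r := r.+1); have F_N := filtration_prec_delta (r := r.+1).
pose y := falling prec_delta 1 r x.
have Fy : filtration r.+1 y by apply: falling_stable F_lin F_N _ _ _ Fx.
have py : primitive Delta y.
  apply: primitive_of_prec_delta_eq0 Fy _.
  by have := falling_filtration Fx; rewrite fallingS scale0r subr0.
have [w Fw yE] := falling_decomp F_lin F_N r 1 (filtration0 _) Fx.
set c := \prod_(k < r) _ in yE.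
have c0 : c != 0 by apply/prodf_neq0 => k _; rewrite add1n oppr_eq0 natrS_neq0.
have -> : x = c^-1 *: y + ((- c^-1) *: prec_delta w + 0).
  by rewrite addr0 /y yE scalerDr scalerA mulVf // scale1r scaleNr addrK.
exact: mg_lin _ (mg_base _ py) (mg_lin _ (prec_delta_generated IH Fw) (mg_zero _ _)).
Qed.

Lemma pr1_generated x : moor_gen prec (primitive Delta) x -> primitive Delta (pr 1 x).
Proof.
case: HM => pr_graded prec_moor _ _.
elim=> [z pz| |a u v _ pu _ pv|u v _ _ _ _].
- by rewrite (primitive_homog1 pz).
- by rewrite linear0; exact: primitive0.
- by rewrite linearP; exact: primitive_lin.
- by rewrite (pr1_prec pr_graded prec_moor); exact: primitive0.
Qed.

End MoorBialgebra.

Theorem lemma4p3 (K : fieldType) (H : lmodType K)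
    (pr : nat -> {linear H -> H}) (prec : H -> H -> H)
    (Delta : H -> seq (H * H)) :
  [pchar K] =i pred0 ->
  moor_bialgebra pr prec Delta ->
  connected pr Delta ->
  (forall x, moor_gen prec (primitive Delta) x) /\
  (forall x, primitive Delta x <-> homog pr 1 x).
Proof.
move=> charK0 HM [primitive_homog1 iter_delta_nil].
have generated x : moor_gen prec (primitive Delta) x.
  have [r _ Dr_x] := iter_delta_nil x.
  apply: (filtration_generated (HM := HM) primitive_homog1 charK0 (r := r)).
  by apply: filtration_of_iter_eval => fs; rewrite /iter_eval Dr_x /tens_eval big_nil.
split=> // x; split=> [|<-]; first exact: primitive_homog1.
exact: (pr1_generated HM primitive_homog1).
Qed.
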